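(* Consider the covariate-adaptive randomization procedure described in the context with $I\ge1$ covariates, covariate $i$ having $m_i>1$ levels ($m=\prod_{i=1}^I m_i$ strata), and nonnegative weights $w_o$, $w_s$, $w_{m,i}$ ($i=1,\dots,I$) with $w_o+\sum_{i=1}^I w_{m,i}+w_s=1$. If \[ u^*:=\sum_{l=1}^{I}\ \sum_{1\le i_1<i_2<\dots<i_l\le I}\Big\{\Big(w_o+\sum_{j\in\{1,\dots,I\}\setminus\{i_1,\dots,i_l\}}w_{m,j}\Big)\prod_{t=1}^l (m_{i_t}-1)\Big\}<\frac12, \] then $(\mathbf{D}_n)_{n\ge1}$ is a positive recurrent Markov chain on $\mathbb{Z}^m$.
   Context: Two treatments, labelled 1 and 2. There are $I$ covariates, covariate $i$ having $m_i$ levels; a stratum is a profile $(k_1,\dots,k_I)$ with $1\le k_i\le m_i$. The margin $(i;k_i)$ is the set of patients whose $i$-th covariate is at level $k_i$. Patients arrive sequentially; their covariate profiles $Z_1,Z_2,\dots$ are i.i.d., $P(Z_j=(k_1,\dots,k_I))=p(k_1,\dots,k_I)\ge0$, summing to 1. For the first $n$ patients let $D_n$ be (number assigned to treatment 1) minus (number assigned to treatment 2) overall, $D_n(i;k_i)$ the same difference within margin $(i;k_i)$, and $D_n(k_1,\dots,k_I)$ within stratum $(k_1,\dots,k_I)$; $\mathbf{D}_n=[D_n(k_1,\dots,k_I)]\in\mathbb{Z}^m$. Procedure: fix the weights above and $0<q<p<1$ with $p+q=1$. Patient 1 gets treatment 1 with probability $1/2$. For $n>1$, if patient $n$ is in stratum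 $(k_1^*,\dots,k_I^* )$, let $\mathit{Imb}_n^{(1)}=w_o(D_{n-1}+1)^2+\sum_{i=1}^I w_{m,i}(D_{n-1}(i;k_i^* )+1)^2+w_s(D_{n-1}(k_1^*,\dots,k_I^* )+1)^2$ and $\mathit{Imb}_n^{(2)}$ the same with $+1$ replaced by $-1$. Conditional on $Z_1,\dots,Z_n$ and previous assignments, patient $n$ is assigned treatment 1 with probability $q$ if $\mathit{Imb}_n^{(1)}>\mathit{Imb}_n^{(2)}$, $p$ if $\mathit{Imb}_n^{(1)}<\mathit{Imb}_n^{(2)}$, and $1/2$ otherwise. Under this procedure $(\mathbf{D}_n)_{n\ge1}$ is a Markov chain on $\mathbb{Z}^m$. *)

From HB Require Import structures.
From mathcomp Require Import all_boot all_order all_algebra.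
From mathcomp Require Import all_classical all_reals all_analysis.
Set Implicit Arguments. Unset Strict Implicit. Unset Printing Implicit Defensive.
Import Order.TTheory GRing.Theory Num.Theory.
Import numFieldNormedType.Exports.
Local Open Scope classical_set_scope.
Local Open Scope ring_scope.

(* Strata: profiles (k_1,...,k_I) with k_i a level of covariate i
   (levels are numbered 0 .. m_i - 1). *)
Definition stratum (I : nat) (m : 'I_I -> nat) : finType :=
  {dffun forall i : 'I_I, 'I_(m i)}.

(* A state of the chain: the vector D = [D(k)]_k in Z^m, m = #|stratum|. *)
Definition state (I : nat) (m : 'I_I -> nat) := {ffun stratum m -> int}.

Section Procedure.
Variables (R : realType) (I : nat) (m : 'I_I -> nat).
Variable (pr : stratum m -> R).
Variables (wo ws : R) (wm : 'I_I -> R).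
Variables (pb qb : R).

Definition Dall (D : state m) : int := \sum_k D k.
Definition Dmarg (D : state m) (i : 'I_I) (l : 'I_(m i)) : int :=
  \sum_(k : stratum m | k i == l) D k.
Arguments Dmarg D i l : clear implicits.

(* Imb^{(1)} (s = 1) and Imb^{(2)} (s = -1) for a new patient in stratum k *)
Definition imb (D : state m) (k : stratum m) (s : int) : R :=
  wo * ((Dall D + s)%:~R) ^+ 2
  + \sum_(i : 'I_I) wm i * ((Dmarg D i (k i) + s)%:~R) ^+ 2
  + ws * ((D k + s)%:~R) ^+ 2.

Definition prob1 (D : state m) (k : stratum m) : R :=
  let a := imb D k 1 in let b := imb D k (-1) in
  if b < a then qb else if a < b then pb else 1 / 2.

(* new state after a patient in stratum k gets treatment 1 (b = true)
   or treatment 2 (b = false) *)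
Definition step (D : state m) (k : stratum m) (b : bool) : state m :=
  [ffun k' => D k' + (if k' == k then (if b then 1 else -1) else 0)].

Definition trans_w (D : state m) (k : stratum m) (b : bool) : R :=
  pr k * (if b then prob1 D k else 1 - prob1 D k).

Fixpoint nstep (n : nat) (x y : state m) : R :=
  match n with
  | 0 => (x == y)%:R
  | n'.+1 => \sum_(k : stratum m) \sum_(b : bool) trans_w x k b * nstep n' (step x k b) y
  end.

(* first-passage probability f^{(n)}(x, y) = P_x(T_y = n),
   T_y = inf {n >= 1 : X_n = y} *)
Fixpoint fpass (n : nat) (x y : state m) : R :=
  match n with
  | 0 => 0
  | n'.+1 => \sum_(k : stratum m) \sum_(b : bool)
      trans_w x k b *
      (let z := step x k b in if z == y then (n' == 0%N)%:R else fpass n' z y)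
  end.

(* initial state D_0 = 0 (patient 1 is then assigned with probability 1/2,
   as the rule gives when all imbalances are equal) *)
Definition D0 : state m := [ffun => 0].

Definition pos_recurrent_state (y : state m) : Prop :=
  (series (fun n => fpass n y y) @ \oo --> (1 : R)) /\
  cvgn (series (fun n => n%:R * fpass n y y)).

Definition positive_recurrent_chain : Prop :=
  forall y : state m, (exists n, 0 < nstep n D0 y) -> pos_recurrent_state y.

End Procedure.

Definition ustar (R : realType) (I : nat) (m : 'I_I -> nat)
  (wo : R) (wm : 'I_I -> R) : R :=
  \sum_(S : {set 'I_I} | S != finset.set0)
     ((wo + \sum_(j : 'I_I | j \notin S) wm j) * \prod_(t in S) ((m t).-1)%:R).

(* The weighted sum [lyap] of the squared overall, marginal and within-stratum
   imbalances is a Lyapunov function.  A new patient in stratum k changes it by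
   1 +- 2 L(k), where Imb^(1) - Imb^(2) = 4 L(k), and the biased coin takes the
   sign of -L(k) with probability p, so its expected increment is
   1 - 2 (p - q) E|L(Z)|.  The singleton terms of u* alone show that u* < 1/2
   forces w_s > 0, or a single covariate with w_m > 0; either way [lyap] is a
   coercive quadratic form, so around any target state y the drift is at most
   -1 outside a finite l1-ball.  Inside the ball the chain reaches y within D
   steps with probability at least eta^D, moving one patient at a time towards
   y.  A Foster-type estimate for the chain killed at y then bounds E_y[T_y]. *)

From HB Require Import structures.
From mathcomp Require Import all_boot all_order all_algebra.
From mathcomp Require Import all_classical all_reals all_analysis.
From mathcomp Require Import ring lra zify.
Set Implicit Arguments. Unset Strict Implicit. Unset Printing Implicit Defensive.
Import Order.TTheory GRing.Theory Num.Theory.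
Import numFieldNormedType.Exports.
Local Open Scope ring_scope.

(** * Hitting times of a chain with finitely many moves *)

Section TabooChain.
Local Open Scope classical_set_scope.
Variables (R : realType) (T : eqType) (K : finType).
Variables (w : T -> K -> R) (next : T -> K -> T) (y : T).
Hypotheses (w_ge0 : forall x k, 0 <= w x k) (w_sum1 : forall x, \sum_k w x k = 1).

Definition mean_next (f : T -> R) (x : T) : R := \sum_k w x k * f (next x k).

(* [taboo] is the transition operator of the chain killed on reaching [y]:
   with T_y the first time >= 1 at which the chain is at [y],
   [survival n x] = P_x(T_y > n), [trunc_hit n x] = E_x[min(T_y, n)] and
   [first_hit n x] = P_x(T_y = n). *)

Definition taboo (f : T -> R) (x : T) : R :=
  \sum_k w x k * (if next x k == y then 0 else f (next x k)).

Definition survival (n : nat) : T -> R := iter n taboo (fun=> 1).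

Definition trunc_hit (n : nat) (x : T) : R := \sum_(j < n) survival j x.

Fixpoint first_hit (n : nat) (x : T) : R :=
  if n is n'.+1 then
    \sum_k w x k * (if next x k == y then (n' == 0%N)%:R else first_hit n' (next x k))
  else 0.

Lemma w_le1 x k : w x k <= 1.
Proof. by rewrite -(w_sum1 x) (bigD1 k) //= lerDl sumr_ge0. Qed.

Lemma mean_nextDr f c x : mean_next (fun z => f z + c) x = mean_next f x + c.
Proof.
rewrite /mean_next -[c in RHS]mul1r -(w_sum1 x) mulr_suml -big_split /=.
by apply: eq_bigr => k _; rewrite mulrDr.
Qed.

Lemma taboo_le_mean_next f x : (forall z, 0 <= f z) -> taboo f x <= mean_next f x.
Proof. by move=> f_ge0; apply: ler_sum => k _; apply: ler_wpM2l => //; case: ifP. Qed.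

Lemma taboo_ge0 f x : (forall z, 0 <= f z) -> 0 <= taboo f x.
Proof. by move=> f_ge0; apply: sumr_ge0 => k _; apply: mulr_ge0 => //; case: ifP. Qed.

Lemma taboo_le_const f c x : 0 <= c -> (forall z, f z <= c) -> taboo f x <= c.
Proof.
move=> c_ge0 f_le; apply: (@le_trans _ _ (\sum_k w x k * c)).
  by apply: ler_sum => k _; apply: ler_wpM2l => //; case: ifP.
by rewrite -mulr_suml w_sum1 mul1r.
Qed.

Lemma taboo_le f g x : (forall z, f z <= g z) -> taboo f x <= taboo g x.
Proof. by move=> fg; apply: ler_sum => k _; apply: ler_wpM2l => //; case: ifP. Qed.

Lemma taboo_lin f g a x : taboo (fun z => f z + a * g z) x = taboo f x + a * taboo g x.
Proof.
rewrite /taboo mulr_sumr -big_split; apply: eq_bigr => k _ /=.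
by case: ifP => _; ring.
Qed.

Lemma taboo_sum n (F : nat -> T -> R) x :
  taboo (fun z => \sum_(j < n) F j z) x = \sum_(j < n) taboo (F j) x.
Proof.
rewrite /taboo exchange_big; apply: eq_bigr => k _ /=; rewrite -mulr_sumr.
by case: ifP => // _; rewrite big1.
Qed.

Lemma survival_ge0 n x : 0 <= survival n x.
Proof. by elim: n x => [|n IH] x /=; [exact: ler01 | exact: taboo_ge0]. Qed.

Lemma survival_le1 n x : survival n x <= 1.
Proof. by elim: n x => [|n IH] x //=; exact: taboo_le_const. Qed.

Lemma survivalS_le n x : survival n.+1 x <= survival n x.
Proof.
elim: n x => [|n IH] x; first exact: taboo_le_const.
exact: taboo_le.
Qed.

Lemma survival_le n n' x : (n <= n')%N -> survival n' x <= survival n x.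
Proof.
move=> /subnK <-; elim: (n' - n)%N => // d IH.
by rewrite addSn; apply: le_trans IH; exact: survivalS_le.
Qed.

Lemma trunc_hitS n x : trunc_hit n.+1 x = 1 + taboo (trunc_hit n) x.
Proof. by rewrite /trunc_hit big_ord_recl taboo_sum. Qed.

Lemma trunc_hitSr n x : trunc_hit n.+1 x = trunc_hit n x + survival n x.
Proof. by rewrite /trunc_hit big_ord_recr. Qed.

Lemma trunc_hit_le n x : trunc_hit n x <= n%:R.
Proof.
have -> : n%:R = \sum_(j < n) (1 : R) by rewrite sumr_const card_ord.
by apply: ler_sum => j _; exact: survival_le1.
Qed.

Lemma first_hit_ge0 n x : 0 <= first_hit n x.
Proof.
elim: n x => [|n IH] x //=; apply: sumr_ge0 => k _; apply: mulr_ge0 => //.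
by case: ifP.
Qed.

Lemma sum_first_hit n x : \sum_(j < n.+1) first_hit j x = 1 - survival n x.
Proof.
elim: n x => [|n IH] x; first by rewrite big_ord1 subrr.
rewrite big_ord_recl add0r /= /taboo -[X in X - _](w_sum1 x) -sumrB exchange_big.
apply: eq_bigr => k _; rewrite -mulr_sumr -[X in X - _]mulr1 -mulrBr.
congr (_ * _); case: ifP => _; last exact: IH.
by rewrite big_ord_recl big1 ?addr0 ?subr0.
Qed.

Lemma sum_mul_first_hit_le n x : \sum_(j < n) j%:R * first_hit j x <= trunc_hit n x.
Proof.
have tail_ge0 : 0 <= 1 - \sum_(j < n) first_hit j x.
  case: n => [|n]; first by rewrite big_ord0 subr0 ler01.
  by rewrite sum_first_hit opprB addrC subrK survival_ge0.
suff <- : \sum_(j < n) j%:R * first_hit j x + n%:R * (1 - \sum_(j < n) first_hit j x)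
    = trunc_hit n x by rewrite lerDl mulr_ge0.
elim: n {tail_ge0} => [|n IH]; first by rewrite /trunc_hit !big_ord0 mul0r addr0.
rewrite trunc_hitSr -IH.
have -> : survival n x = 1 - \sum_(j < n.+1) first_hit j x.
  by rewrite sum_first_hit opprB addrC subrK.
rewrite !big_ord_recr /=; ring.
Qed.

Lemma first_hit_pos_recurrent H : (forall n, trunc_hit n y <= H) ->
  series (first_hit^~ y) @ \oo --> (1 : R) /\ cvgn (series (fun n => n%:R * first_hit n y)).
Proof.
move=> trunc_le; split; last first.
  apply: nondecreasing_is_cvgn.
    by apply: nondecreasing_series => n _ _; rewrite mulr_ge0 ?first_hit_ge0.
  exists H => _ [n _ <-]; rewrite seriesEord.
  exact: le_trans (sum_mul_first_hit_le n y) (trunc_le n).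
have survival_le_harmonic n : survival n y <= H * harmonic n.
  have : \sum_(j < n.+1) survival n y <= H.
    apply: le_trans (trunc_le n.+1); apply: ler_sum => j _.
    by apply: survival_le; rewrite -ltnS.
  by rewrite sumr_const card_ord -mulr_natr /= ler_pdivlMr.
rewrite -cvg_shiftS.
have -> : [sequence series (first_hit^~ y) n.+1]_n = (fun n => 1 - survival n y).
  by apply/funext => n; rewrite /= seriesEord /= sum_first_hit.
suff : (fun n => 1 - survival n y) @ \oo --> (1 - 0 : R) by rewrite subr0.
apply: cvgB; first exact: cvg_cst.
apply: (@squeeze_cvgr _ _ _ _ (cst 0) (H *: @harmonic R)).
- by near=> n; rewrite survival_ge0 survival_le_harmonic.
- exact: cvg_cst.
- by rewrite -(scaler0 _ H); exact: cvgZl_tmp cvg_harmonic.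
Unshelve. all: by end_near.
Qed.

Variable C : T -> Prop.
Hypothesis C_next : forall x k, C x -> w x k != 0 -> C (next x k).

Lemma taboo_le_in f g x : C x -> (forall z, C z -> z != y -> f z <= g z) ->
  taboo f x <= taboo g x.
Proof.
move=> Cx fg; apply: ler_sum => k _.
have [->|wk] := eqVneq (w x k) 0; first by rewrite !mul0r.
apply: ler_wpM2l => //; case: ifP => // ny.
by apply: fg; [exact: C_next | rewrite ny].
Qed.

Lemma iter_taboo_le_in n f g x : C x -> x != y ->
  (forall z, C z -> z != y -> f z <= g z) -> iter n taboo f x <= iter n taboo g x.
Proof.
move=> Cx xy fg; elim: n x Cx xy => [|n IH] x Cx xy /=; first exact: fg.
by apply: taboo_le_in => // z Cz zy; exact: IH.
Qed.

Lemma iter_taboo_lin n f g a x :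
  iter n taboo (fun z => f z + a * g z) x = iter n taboo f x + a * iter n taboo g x.
Proof.
elim: n x => [|n IH] x //=.
by rewrite -taboo_lin; apply: eq_bigr => k _; rewrite IH.
Qed.

Lemma trunc_hit_unroll n r x : C x ->
  trunc_hit (n + r) x <= r%:R + iter r taboo (trunc_hit n) x.
Proof.
elim: r x => [|r IH] x Cx; first by rewrite addn0 add0r.
rewrite addnS trunc_hitS /= mulrS -addrA lerD2l.
apply: (@le_trans _ _ (taboo (fun z => iter r taboo (trunc_hit n) z + r%:R * 1) x)).
  by apply: taboo_le_in => // z Cz _; rewrite mulr1 addrC; exact: IH.
rewrite taboo_lin [leRHS]addrC lerD2l -[leRHS]mulr1 ler_wpM2l ?ler0n //.
exact: taboo_le_const.
Qed.

Lemma taboo_le_move f x k : (forall z, f z <= 1) ->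
  taboo f x <= 1 - w x k * (1 - (if next x k == y then 0 else f (next x k))).
Proof.
move=> f_le1; set g := fun j => if next x j == y then 0 else f (next x j).
have g_le1 k' : g k' <= 1 by rewrite /g; case: ifP.
have e : \sum_k' w x k' * (1 - g k') = 1 - taboo f x.
  rewrite /taboo -[X in X - _](w_sum1 x) -sumrB.
  by apply: eq_bigr => k' _; rewrite mulrBr mulr1.
suff : w x k * (1 - g k) <= \sum_k' w x k' * (1 - g k') by rewrite e -/(g k); lra.
have terms_ge0 k' : 0 <= w x k' * (1 - g k') by rewrite mulr_ge0 ?subr_ge0.
by rewrite (bigD1 k) //= lerDl sumr_ge0.
Qed.

Lemma survival_le_dist (dist : T -> nat) (eta : R) : 0 < eta ->
  (forall x, C x -> x != y -> exists2 k, eta <= w x k & (dist (next x k) < dist x)%N) ->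
  forall d x, C x -> x != y -> (dist x <= d)%N -> survival d x <= 1 - eta ^+ d.
Proof.
move=> eta_gt0 descent; elim=> [|d IH] x Cx xy dist_le.
  by have [k _ dist_lt] := descent x Cx xy; lia.
have [k eta_le dist_lt] := descent x Cx xy.
apply: le_trans (taboo_le_move x k (survival_le1 d)) _.
have eta_ge0 := ltW eta_gt0.
rewrite lerD2l lerN2 exprS; apply: ler_pM => //; first exact: exprn_ge0.
case: ifP => [_ | /negbT ny].
  by rewrite subr0 exprn_ile1 // (le_trans eta_le (w_le1 x k)).
have Cnext : C (next x k) by apply: C_next => //; rewrite gt_eqF // (lt_le_trans eta_gt0).
have := IH _ Cnext ny (ltnSE (leq_trans dist_lt dist_le)); lra.
Qed.

Variable V : T -> R.
Hypothesis V_ge0 : forall z, 0 <= V z.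
Hypothesis mean_next_V : forall z, C z -> mean_next V z <= V z + 1.

Lemma iter_taboo_V_le r x : C x -> iter r taboo V x <= V x + r%:R.
Proof.
elim: r x => [|r IH] x Cx /=; first by rewrite addr0.
apply: (@le_trans _ _ (taboo (fun z => V z + r%:R) x)).
  by apply: taboo_le_in => // z Cz _; exact: IH.
apply: le_trans (taboo_le_mean_next (f := fun z => V z + r%:R) x _) _.
  by move=> z; rewrite addr_ge0.
by rewrite mean_nextDr mulrSr; have := mean_next_V Cx; lra.
Qed.

Variables (N : nat) (delta : R).
Hypothesis delta_gt0 : 0 < delta.
Hypothesis drift_or_hit : forall z, C z -> z != y ->
  mean_next V z <= V z - 1 \/ survival N z <= 1 - delta.

(* Where the drift is not below -1, unroll N steps: they cost at most 2N, and
   with probability at least delta they end the excursion, which pays for the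
   constant A = 2N / delta. *)
Lemma trunc_hit_le_lyap n x : C x -> x != y -> trunc_hit n x <= V x + 2 * N%:R / delta.
Proof.
set A := 2 * N%:R / delta.
have A_delta : A * delta = 2 * N%:R by rewrite divfK // gt_eqF.
have A_ge0 : 0 <= A by rewrite divr_ge0 // ltW.
elim/ltn_ind: n x => n IH x Cx xy; have Vx_ge0 := V_ge0 x.
case: (drift_or_hit Cx xy) => [drift | surv].
  case: n IH => [|n] IH; first by rewrite /trunc_hit big_ord0; lra.
  apply: (@le_trans _ _ (1 + taboo (fun z => V z + A) x)).
    by rewrite trunc_hitS lerD2l; apply: taboo_le_in => // z Cz zy; exact: IH.
  apply: (@le_trans _ _ (1 + mean_next (fun z => V z + A) x)).
    by rewrite lerD2l taboo_le_mean_next // => z; rewrite addr_ge0.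
  by rewrite mean_nextDr; lra.
have delta_le1 : delta <= 1 by move: (survival_ge0 N x) surv; lra.
have N_le_A : N%:R <= A.
  rewrite -(ler_pM2r delta_gt0) A_delta.
  have : N%:R * delta <= N%:R * 1 by rewrite ler_wpM2l.
  by have := ler0n R N; lra.
have [n_lt|N_le] := ltnP n N.
  have : n%:R <= N%:R :> R by rewrite ler_nat ltnW.
  by have := trunc_hit_le n x; lra.
have N_gt0 : (0 < N)%N by case: (posnP N) surv => // -> /=; move: delta_gt0; lra.
have unroll := trunc_hit_unroll (n - N) N Cx; rewrite subnK // in unroll.
have iter_le : iter N taboo (trunc_hit (n - N)) x <= iter N taboo V x + A * survival N x.
  rewrite -iter_taboo_lin; apply: iter_taboo_le_in => // z Cz zy; rewrite mulr1.
  by apply: IH => //; rewrite ltn_subrL N_gt0 (leq_trans N_gt0).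
have : A * survival N x <= A - 2 * N%:R.
  by rewrite -A_delta -{2}[A]mulr1 -mulrBr ler_wpM2l.
by have := iter_taboo_V_le N Cx; lra.
Qed.

Lemma trunc_hit_bounded : C y -> exists H, forall n, trunc_hit n y <= H.
Proof.
move=> Cy; set A := 2 * N%:R / delta.
have A_ge0 : 0 <= A by rewrite divr_ge0 // ltW.
have mean_ge0 : 0 <= mean_next V y by apply: sumr_ge0 => k _; exact: mulr_ge0.
exists (1 + mean_next V y + A) => -[|n]; first by rewrite /trunc_hit big_ord0; lra.
rewrite trunc_hitS -addrA lerD2l -mean_nextDr.
apply: (@le_trans _ _ (taboo (fun z => V z + A) y)).
  by apply: taboo_le_in => // z Cz zy; exact: trunc_hit_le_lyap.
by apply: taboo_le_mean_next => z; rewrite addr_ge0.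
Qed.

End TabooChain.

(** * The biased coin minimization chain *)

Section BiasedCoin.
Variables (R : realType) (I : nat) (m : 'I_I -> nat) (pr : stratum m -> R).
Variables (wo ws : R) (wm : 'I_I -> R) (pb qb : R).
Hypotheses (pr_ge0 : forall k, 0 <= pr k) (pr_sum1 : \sum_k pr k = 1).
Hypotheses (wo_ge0 : 0 <= wo) (ws_ge0 : 0 <= ws) (wm_ge0 : forall i, 0 <= wm i).
Hypothesis weights_sum1 : wo + \sum_i wm i + ws = 1.
Hypotheses (qb_gt0 : 0 < qb) (qb_lt_pb : qb < pb) (pb_qb : pb + qb = 1).
Hypotheses (I_gt0 : (0 < I)%N) (m_gt1 : forall i, (1 < m i)%N).
Hypothesis ustar_lt_half : ustar m wo wm < 1 / 2.

Definition imb_lin (x : state m) (k : stratum m) : R :=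
  wo * (Dall x)%:~R + \sum_i wm i * (Dmarg x (k i))%:~R + ws * (x k)%:~R.

Lemma imb_shift x k : imb wo ws wm x k 1%R = imb wo ws wm x k (-1)%R + 4 * imb_lin x k.
Proof.
have shift (a : int) (c : R) :
    c * (a + 1)%:~R ^+ 2 = c * (a + -1)%:~R ^+ 2 + 4 * (c * a%:~R).
  by rewrite !intrD mulrN1z; ring.
rewrite /imb /imb_lin !shift; under eq_bigr do rewrite shift.
by rewrite big_split /= -mulr_sumr; ring.
Qed.

Lemma prob1E x k : prob1 wo ws wm pb qb x k =
  if 0 < imb_lin x k then qb else if imb_lin x k < 0 then pb else 1 / 2.
Proof.
by rewrite /prob1 /= imb_shift ltrDl gtrDl pmulr_rgt0 // pmulr_rlt0.
Qed.

Lemma prob1_bias x k :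
  (2 * prob1 wo ws wm pb qb x k - 1) * imb_lin x k = - (pb - qb) * `|imb_lin x k|.
Proof.
have gap_p : 2 * pb - 1 = pb - qb by move: pb_qb; lra.
have gap_q : 2 * qb - 1 = - (pb - qb) by move: pb_qb; lra.
rewrite prob1E; have [L_lt0|L_gt0|->] := ltrgtP (imb_lin x k) 0.
- by rewrite ltr0_norm // gap_p mulrN mulNr opprK.
- by rewrite gtr0_norm // gap_q.
- by rewrite normr0 !mulr0.
Qed.

Lemma qb_le_prob1 (x : state m) k : qb <= prob1 wo ws wm pb qb x k.
Proof. by rewrite prob1E; move: qb_lt_pb pb_qb; do 2?case: ifP => _; lra. Qed.

Lemma prob1_le_pb (x : state m) k : prob1 wo ws wm pb qb x k <= pb.
Proof. by rewrite prob1E; move: qb_lt_pb pb_qb; do 2?case: ifP => _; lra. Qed.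

Definition sgn (b : bool) : int := if b then 1 else -1.

Lemma sgn_sqr b : ((sgn b)%:~R : R) ^+ 2 = 1.
Proof. by case: b; rewrite /= ?mulrN1z ?sqrrN expr1n. Qed.

Lemma stepE (x : state m) k b k' : step x k b k' = x k' + (if k' == k then sgn b else 0).
Proof. by rewrite ffunE. Qed.

Lemma Dall_step (x : state m) k b : Dall (step x k b) = Dall x + sgn b.
Proof.
rewrite /Dall; under eq_bigr do rewrite stepE.
rewrite big_split /=; congr (_ + _).
by rewrite (bigD1 k) //= eqxx big1 ?addr0 // => k' /negbTE ->.
Qed.

Lemma Dmarg_step (x : state m) k b i (l : 'I_(m i)) :
  Dmarg (step x k b) l = Dmarg x l + (if l == k i then sgn b else 0).
Proof.
rewrite /Dmarg; under eq_bigr do rewrite stepE.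
rewrite big_split /=; congr (_ + _); case: eqP => [->|ne].
  by rewrite (bigD1 k) //= eqxx big1 ?addr0 // => k' /andP[_ /negbTE ->].
by rewrite big1 // => k' /eqP k'l; case: eqP => // k'k; case: ne; rewrite -k'l k'k.
Qed.

Definition lyap (x : state m) : R :=
  wo * (Dall x)%:~R ^+ 2 + \sum_i wm i * \sum_(l : 'I_(m i)) (Dmarg x l)%:~R ^+ 2
  + ws * \sum_k (x k)%:~R ^+ 2.

Lemma sum_sqr_ge0 (T : finType) (f : T -> int) : 0 <= \sum_t ((f t)%:~R : R) ^+ 2.
Proof. by apply: sumr_ge0 => t _; exact: sqr_ge0. Qed.

Lemma lyap_ge0 x : 0 <= lyap x.
Proof.
apply: addr_ge0; [apply: addr_ge0 | exact: mulr_ge0 (sum_sqr_ge0 _)].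
- by rewrite mulr_ge0 ?sqr_ge0.
- by apply: sumr_ge0 => i _; exact: mulr_ge0 (sum_sqr_ge0 _).
Qed.

Lemma sum_sqr_shift (T : finType) (f : T -> int) (t : T) (s : int) :
  s%:~R ^+ 2 = 1 :> R ->
  \sum_u ((f u + (if u == t then s else 0))%:~R : R) ^+ 2 =
  \sum_u (f u)%:~R ^+ 2 + 2 * s%:~R * (f t)%:~R + 1.
Proof.
move=> s_sqr; rewrite (bigD1 t) //= [in RHS](bigD1 t) //= eqxx.
rewrite (eq_bigr (fun u => (f u)%:~R ^+ 2)) => [|u /negbTE ->]; last by rewrite addr0.
by rewrite intrD sqrrD s_sqr; ring.
Qed.

Lemma lyap_step x k b : lyap (step x k b) = lyap x + 2 * (sgn b)%:~R * imb_lin x k + 1.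
Proof.
rewrite /lyap /imb_lin Dall_step; under eq_bigr do under eq_bigr do rewrite Dmarg_step.
under [X in _ + ws * X]eq_bigr do rewrite stepE.
rewrite sum_sqr_shift ?sgn_sqr //; under eq_bigr do rewrite sum_sqr_shift ?sgn_sqr //.
have -> : \sum_i wm i * (\sum_(l : 'I_(m i)) (Dmarg x l)%:~R ^+ 2
      + 2 * (sgn b)%:~R * (Dmarg x (k i))%:~R + 1) =
    \sum_i wm i * \sum_(l : 'I_(m i)) (Dmarg x l)%:~R ^+ 2
      + 2 * (sgn b)%:~R * \sum_i wm i * (Dmarg x (k i))%:~R + \sum_i wm i.
  by rewrite !mulr_sumr -!big_split; apply: eq_bigr => i _ /=; ring.
rewrite -[X in _ = _ + X]weights_sum1 intrD sqrrD sgn_sqr; ring.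
Qed.

Definition move_w (x : state m) (kb : stratum m * bool) : R :=
  trans_w pr wo ws wm pb qb x kb.1 kb.2.

Definition move_next (x : state m) (kb : stratum m * bool) : state m := step x kb.1 kb.2.

Lemma move_w_ge0 x kb : 0 <= move_w x kb.
Proof.
rewrite /move_w /trans_w; apply: mulr_ge0 => //.
have := qb_le_prob1 x kb.1; have := prob1_le_pb x kb.1.
by case: kb.2; move: qb_gt0 qb_lt_pb pb_qb; lra.
Qed.

Lemma move_w_sum1 x : \sum_kb move_w x kb = 1.
Proof.
rewrite -pr_sum1 -pair_bigA; apply: eq_bigr => k _.
by rewrite big_bool /= /trans_w -mulrDr addrC subrK mulr1.
Qed.

Lemma fpass_first_hit :
  fpass pr wo ws wm pb qb = fun n x y => first_hit move_w move_next y n x.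
Proof.
apply/funext => n; apply/funext => x; apply/funext => y.
elim: n x => [|n IH] x //=; rewrite pair_bigA; apply: eq_bigr => -[k b] _ /=.
by rewrite IH.
Qed.

Lemma mean_next_moves f x : mean_next move_w move_next f x =
  \sum_k \sum_b trans_w pr wo ws wm pb qb x k b * f (step x k b).
Proof. by rewrite /mean_next pair_bigA. Qed.

Lemma mean_next_lyap x : mean_next move_w move_next lyap x =
  lyap x + 1 - 2 * (pb - qb) * \sum_k pr k * `|imb_lin x k|.
Proof.
rewrite mean_next_moves.
transitivity (\sum_k (pr k * (lyap x + 1) - 2 * (pb - qb) * (pr k * `|imb_lin x k|))).
  apply: eq_bigr => k _; rewrite big_bool /= /trans_w !lyap_step /=.
  rewrite mulrN1z; have := prob1_bias x k.
  set p := prob1 _ _ _ _ _ _ _; set L := imb_lin x k => bias.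
  apply/eqP; rewrite -subr_eq0; apply/eqP.
  transitivity (2 * pr k * ((2 * p - 1) * L + (pb - qb) * `|L|)); first ring.
  by rewrite bias mulNr addNr mulr0.
by rewrite sumrB -mulr_suml pr_sum1 mul1r -mulr_sumr.
Qed.

Lemma mean_next_lyap_le x : mean_next move_w move_next lyap x <= lyap x + 1.
Proof.
rewrite mean_next_lyap lerBlDr lerDl mulr_ge0 ?sumr_ge0 // => [|k _].
  by rewrite mulr_ge0 // subr_ge0 ltW.
exact: mulr_ge0.
Qed.

(* Strata of probability zero never receive patients, so this contains every
   state reachable from [y]. *)
Definition off_support_eq (y x : state m) : Prop := forall k, pr k = 0 -> x k = y k.

Lemma off_support_eq_next y x kb : off_support_eq y x -> move_w x kb != 0 ->
  off_support_eq y (move_next x kb).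
Proof.
move=> xy w_neq0 k' pr0; rewrite stepE; case: eqP => [k'k|_]; last by rewrite addr0 xy.
by move: w_neq0; rewrite /move_w /trans_w -k'k pr0 mul0r eqxx.
Qed.

(** * Coercivity of the Lyapunov function *)

Lemma sum_mul_Dmarg (E : state m) i :
  \sum_k (E k)%:~R * (Dmarg E (k i))%:~R = \sum_(l : 'I_(m i)) (Dmarg E l)%:~R ^+ 2 :> R.
Proof.
rewrite (partition_big (fun k : stratum m => k i) xpredT) //=; apply: eq_bigr => l _.
rewrite (eq_bigr (fun k => (E k)%:~R * (Dmarg E l)%:~R)) => [|k /eqP <-] //.
by rewrite -mulr_suml -rmorph_sum expr2.
Qed.

Lemma lyap_sum_mul (E : state m) : lyap E = \sum_k (E k)%:~R * imb_lin E k.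
Proof.
under [RHS]eq_bigr do rewrite /imb_lin !mulrDr mulr_sumr.
rewrite !big_split /= exchange_big /= /lyap; congr (_ + _ + _).
- by rewrite -mulr_suml -rmorph_sum -/(Dall E) /=; ring.
- by apply: eq_bigr => i _; rewrite -sum_mul_Dmarg mulr_sumr; apply: eq_bigr => k _; ring.
- by rewrite mulr_sumr; apply: eq_bigr => k _; ring.
Qed.

Lemma sum_singletons_le_ustar : \sum_i (1 - ws - wm i) <= ustar m wo wm.
Proof.
set t := fun S : {set 'I_I} =>
  (wo + \sum_(j | j \notin S) wm j) * \prod_(u in S) ((m u).-1)%:R.
have t_ge0 S : 0 <= t S.
  by rewrite mulr_ge0 ?addr_ge0 ?sumr_ge0 ?prodr_ge0.
have t_set1 i : 1 - ws - wm i <= t [set i].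
  have m1_ge1 : 1 <= ((m i).-1)%:R :> R by rewrite ler1n -ltnS prednK ?m_gt1 // ltnW.
  have -> : 1 - ws - wm i = wo + \sum_(j | j \notin [set i]) wm j.
    rewrite (eq_bigl (fun j => j != i)) => [|j]; last by rewrite finset.in_set1.
    by move: weights_sum1; rewrite (bigD1 i) //=; lra.
  by rewrite /t big_set1 ler_peMr // addr_ge0 // sumr_ge0.
set singletons := [set [set i] | i : 'I_I].
have -> : ustar m wo wm = \sum_(S | S != finset.set0) t S by [].
rewrite (bigID (mem singletons)) /= -[leLHS]addr0 lerD ?sumr_ge0 //.
rewrite (eq_bigl (mem singletons)) => [|S]; last first.
  by apply/andb_idl => /imsetP[i _ ->]; apply/set0Pn; exists i; rewrite finset.in_set1.
rewrite big_imset => [|i j _ _]; last exact: set1_inj.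
by apply: ler_sum => i _; exact: t_set1.
Qed.

Lemma weights_of_ustar_lt_half :
  0 < ws \/ exists2 i0, 0 < wm i0 & forall i : 'I_I, i = i0.
Proof.
have [ws_gt0|ws_le0] := ltP 0 ws; [by left | right].
have ws0 : ws = 0 by apply/le_anti; rewrite ws_le0 ws_ge0.
have sum_wm_le1 : \sum_i wm i <= 1 by move: weights_sum1 wo_ge0; rewrite ws0; lra.
have := sum_singletons_le_ustar; rewrite ws0 subr0 sumrB sumr_const card_ord => sum_le.
have I_lt2 : (I < 2)%N by rewrite -(ltr_nat R); move: sum_le ustar_lt_half sum_wm_le1; lra.
have all_i0 i : i = Ordinal I_gt0 by apply: val_inj => /=; move: (ltn_ord i); lia.
exists (Ordinal I_gt0) => //.
have I1 : I%:R = 1 :> R by apply/eqP; rewrite pnatr_eq1; lia.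
move: sum_le ustar_lt_half; rewrite I1 (bigD1 (Ordinal I_gt0)) //= big1 => [|i]; last first.
  by rewrite (all_i0 i) eqxx.
lra.
Qed.

Lemma Dmarg_single (E : state m) i0 : (forall i : 'I_I, i = i0) ->
  forall k : stratum m, Dmarg E (k i0) = E k.
Proof.
move=> all_i0 k; rewrite /Dmarg (big_pred1 k) // => k' /=.
apply/eqP/eqP => [k'k|-> //]; apply/ffunP => i.
by move: k'k; rewrite (all_i0 i).
Qed.

Lemma lyap_coercive :
  exists2 c, 0 < c & forall E : state m, c * \sum_k (E k)%:~R ^+ 2 <= lyap E.
Proof.
have other_ge0 (E : state m) (P : pred 'I_I) :
    0 <= \sum_(i | P i) wm i * \sum_(l : 'I_(m i)) (Dmarg E l)%:~R ^+ 2.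
  by apply: sumr_ge0 => i _; exact: mulr_ge0 (sum_sqr_ge0 _).
case: weights_of_ustar_lt_half => [ws_gt0 | [i0 wm_gt0 all_i0]].
  exists ws => // E; rewrite /lyap lerDr addr_ge0 ?other_ge0 //.
  by rewrite mulr_ge0 ?sqr_ge0.
exists (wm i0) => // E.
have -> : \sum_k (E k)%:~R ^+ 2 = \sum_(l : 'I_(m i0)) (Dmarg E l)%:~R ^+ 2 :> R.
  by rewrite -sum_mul_Dmarg; apply: eq_bigr => k _; rewrite Dmarg_single // expr2.
rewrite /lyap (bigD1 i0) //=.
have := other_ge0 E (fun i => i != i0).
have : 0 <= ws * \sum_k (E k)%:~R ^+ 2 by rewrite mulr_ge0 ?sum_sqr_ge0.
have : 0 <= wo * (Dall E)%:~R ^+ 2 by rewrite mulr_ge0 ?sqr_ge0.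
lra.
Qed.

(** * Drift and descent towards a target state *)

Lemma pr_lower_bound : exists2 p0, 0 < p0 & forall k, pr k != 0 -> p0 <= pr k.
Proof.
have [k0 pr_k0] : exists k0, pr k0 != 0.
  case: (pickP (fun k => pr k != 0)) => [k0 pr_k0 | pr0]; first by exists k0.
  move: pr_sum1; rewrite big1 => [/eqP|k _]; first by rewrite eq_sym oner_eq0.
  exact/eqP/negbFE/pr0.
have pr_gt0 k : pr k != 0 -> 0 < pr k by rewrite lt_neqAle eq_sym pr_ge0 andbT.
set S := \sum_(k | pr k != 0) (pr k)^-1.
have inv_le_S k : pr k != 0 -> (pr k)^-1 <= S.
  by move=> prk; rewrite /S (bigD1 k) //= lerDl sumr_ge0 // => k' _; rewrite invr_ge0.
have S_gt0 : 0 < S by apply: lt_le_trans (inv_le_S k0 pr_k0); rewrite invr_gt0 pr_gt0.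
exists S^-1 => [|k prk]; first by rewrite invr_gt0.
by rewrite -[pr k]invrK lef_pV2 ?posrE ?invr_gt0 ?pr_gt0 ?inv_le_S.
Qed.

Lemma move_w_lower_bound :
  exists2 eta, 0 < eta & forall x k b, pr k != 0 -> eta <= move_w x (k, b).
Proof.
have [p0 p0_gt0 p0_le] := pr_lower_bound.
exists (p0 * qb) => [|x k b prk]; first exact: mulr_gt0.
rewrite /move_w /trans_w /=; apply: ler_pM; [exact: ltW | exact: ltW | exact: p0_le |].
by have := qb_le_prob1 x k; have := prob1_le_pb x k; case: b; move: pb_qb; lra.
Qed.

Definition dist1 (y x : state m) : nat := \sum_k `|x k - y k|%N.

Lemma dist1_step (y x : state m) k :
  x k != y k -> (dist1 y (step x k (x k < y k)%R)).+1 = dist1 y x.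
Proof.
move=> xk_neq; rewrite /dist1 (bigD1 k) //= [in RHS](bigD1 k) //= stepE eqxx.
rewrite (eq_bigr (fun k' => `|x k' - y k'|%N)) => [|k' /negbTE k'k]; last first.
  by rewrite stepE k'k addr0.
by rewrite -addSn; congr (_ + _)%N; case: ltP xk_neq => /= ? ?; lia.
Qed.

Lemma move_toward (eta : R) y :
  (forall x k b, pr k != 0 -> eta <= move_w x (k, b)) ->
  forall x, off_support_eq y x -> x != y ->
  exists2 kb, eta <= move_w x kb & (dist1 y (move_next x kb) < dist1 y x)%N.
Proof.
move=> eta_le x x_off x_neq.
have [k xk_neq] : exists k, x k != y k.
  apply/existsP; apply: contraNT x_neq => /existsPn same.
  by apply/eqP/ffunP => k; apply/eqP/negbNE/same.
exists (k, x k < y k); first exact/eta_le/(contra_neq (x_off k)).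
by rewrite -(dist1_step xk_neq).
Qed.

Lemma imb_linB (x y : state m) k :
  imb_lin [ffun k => x k - y k] k = imb_lin x k - imb_lin y k.
Proof.
have DallB : Dall [ffun k => x k - y k] = Dall x - Dall y.
  by rewrite /Dall -sumrB; apply: eq_bigr => k' _; rewrite ffunE.
have DmargB i (l : 'I_(m i)) : Dmarg [ffun k => x k - y k] l = Dmarg x l - Dmarg y l.
  by rewrite /Dmarg -sumrB; apply: eq_bigr => k' _; rewrite ffunE.
rewrite /imb_lin DallB ffunE !intrB; under eq_bigr do rewrite DmargB intrB mulrBr.
by rewrite sumrB; ring.
Qed.

Lemma sum_imb_lin_le_of_drift (p0 : R) x : 0 < p0 -> (forall k, pr k != 0 -> p0 <= pr k) ->
  lyap x - 1 < mean_next move_w move_next lyap x ->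
  \sum_(k | pr k != 0) `|imb_lin x k| <= (p0 * (pb - qb))^-1.
Proof.
move=> p0_gt0 p0_le; rewrite mean_next_lyap => drift_gt.
set S := \sum_k pr k * `|imb_lin x k| in drift_gt *.
have gap_gt0 : 0 < pb - qb by rewrite subr_gt0.
have S_le : S <= (pb - qb)^-1.
  by rewrite -[_^-1]mulr1 ler_pdivlMl //; move: drift_gt; lra.
apply: (@le_trans _ _ (p0^-1 * S)); last by rewrite invfM ler_pM2l ?invr_gt0.
rewrite mulr_sumr [leRHS](bigID (fun k => pr k != 0)) /= -[leLHS]addr0 lerD //.
  apply: ler_sum => k prk; rewrite mulrA -[leLHS]mul1r ler_wpM2r //.
  by rewrite ler_pdivlMl // mulr1 p0_le.
by apply: sumr_ge0 => k _; rewrite !mulr_ge0 // invr_ge0 ltW.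
Qed.

Section SmallDrift.
Variable c : R.
Hypotheses (c_gt0 : 0 < c)
  (coercive : forall E : state m, c * \sum_k (E k)%:~R ^+ 2 <= lyap E).

Lemma norm_le_of_sum_imb_lin (E : state m) (B : R) : (forall k, pr k = 0 -> E k = 0) ->
  \sum_(k | pr k != 0) `|imb_lin E k| <= B -> forall k, c * `|(E k)%:~R| <= B.
Proof.
move=> E_off sum_le k.
case: (@arg_maxnP _ k xpredT (fun k => `|E k|%N) isT) => kmax _ maxE.
set mu := `|(E kmax)%:~R| : R.
have E_le k' : `|(E k')%:~R| <= mu.
  by rewrite /mu -!intr_norm -!natr_absz ler_nat; exact: maxE.
have mu_sqr_le : mu ^+ 2 <= \sum_k' (E k')%:~R ^+ 2.
  rewrite /mu real_normK ?num_real // (bigD1 kmax) //= lerDl.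
  by apply: sumr_ge0 => k' _; exact: sqr_ge0.
have lyap_le : lyap E <= mu * B.
  rewrite lyap_sum_mul (bigID (fun k => pr k != 0)) /= [X in _ + X]big1 => [|k'].
    rewrite addr0; apply: le_trans (ler_wpM2l (normr_ge0 _) sum_le).
    rewrite mulr_sumr; apply: ler_sum => k' _; apply: le_trans (ler_norm _) _.
    by rewrite normrM ler_wpM2r.
  by move=> /negbNE/eqP/E_off ->; rewrite mul0r.
have c_mu : c * mu <= B.
  have sqr_le : c * mu ^+ 2 <= mu * B.
    by have := coercive E; have := ler_wpM2l (ltW c_gt0) mu_sqr_le; move: lyap_le; lra.
  have [mu0|mu_neq0] := eqVneq mu 0.
    by rewrite mu0 mulr0; apply: le_trans sum_le; exact: sumr_ge0.
  have mu_gt0 : 0 < mu by rewrite lt_neqAle eq_sym mu_neq0 normr_ge0.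
  by rewrite -(ler_pM2r mu_gt0) -mulrA -expr2 [B * mu]mulrC.
exact: le_trans (ler_wpM2l (ltW c_gt0) (E_le k)) c_mu.
Qed.

Lemma small_drift_dist1_bound y : exists D : nat, forall x, off_support_eq y x ->
  lyap x - 1 < mean_next move_w move_next lyap x -> (dist1 y x <= D)%N.
Proof.
have [p0 p0_gt0 p0_le] := pr_lower_bound.
set B := (p0 * (pb - qb))^-1 + \sum_k `|imb_lin y k|.
have B_ge0 : 0 <= B.
  apply: addr_ge0; last exact: sumr_ge0.
  by rewrite invr_ge0 ltW // mulr_gt0 // subr_gt0.
exists (#|stratum m| * Num.Def.archi_bound (B / c))%N => x x_off drift_gt.
set E : state m := [ffun k => x k - y k].
have E_off k : pr k = 0 -> E k = 0 by move=> pr0; rewrite ffunE x_off ?subrr.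
have sum_le : \sum_(k | pr k != 0) `|imb_lin E k| <= B.
  apply: (@le_trans _ _ (\sum_(k | pr k != 0) (`|imb_lin x k| + `|imb_lin y k|))).
    by apply: ler_sum => k _; rewrite imb_linB ler_normB.
  rewrite big_split lerD ?sum_imb_lin_le_of_drift //.
  by rewrite [leRHS](bigID (fun k => pr k != 0)) lerDl sumr_ge0.
rewrite /dist1 -sum_nat_const; apply: leq_sum => k _.
apply: ltnW; rewrite -(ltr_nat R).
apply: le_lt_trans (archi_boundP (divr_ge0 B_ge0 (ltW c_gt0))).
rewrite ler_pdivlMr // mulrC natr_absz intr_norm.
by have := norm_le_of_sum_imb_lin E_off sum_le k; rewrite ffunE.
Qed.

End SmallDrift.

Lemma pos_recurrent_every_state y : pos_recurrent_state pr wo ws wm pb qb y.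
Proof.
have [c c_gt0 coercive] := lyap_coercive.
have [D dist_le] := small_drift_dist1_bound c_gt0 coercive y.
have [eta eta_gt0 eta_le] := move_w_lower_bound.
have drift_or_hit z : off_support_eq y z -> z != y ->
    mean_next move_w move_next lyap z <= lyap z - 1 \/
    survival move_w move_next y D z <= 1 - eta ^+ D.
  move=> z_off z_neq; have [drift_le|drift_gt] := leP _ (lyap z - 1); [by left | right].
  exact: (survival_le_dist move_w_ge0 move_w_sum1 (@off_support_eq_next y) eta_gt0
    (move_toward (y := y) eta_le) z_off z_neq (dist_le _ z_off drift_gt)).
have [H trunc_le] := trunc_hit_bounded move_w_ge0 move_w_sum1 (@off_support_eq_next y)
  lyap_ge0 (fun z _ => mean_next_lyap_le z) (exprn_gt0 D eta_gt0) drift_or_hit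
  (fun _ _ => erefl).
rewrite /pos_recurrent_state fpass_first_hit.
exact: (first_hit_pos_recurrent move_w_ge0 move_w_sum1 trunc_le).
Qed.

End BiasedCoin.

Theorem theorem2 (R : realType) (I : nat) (hI : (0 < I)%N)
  (m : 'I_I -> nat) (hm : forall i, (1 < m i)%N)
  (pr : stratum m -> R) (hpr0 : forall k, 0 <= pr k) (hpr1 : \sum_k pr k = 1)
  (wo ws : R) (wm : 'I_I -> R)
  (hwo : 0 <= wo) (hws : 0 <= ws) (hwm : forall i, 0 <= wm i)
  (hw1 : wo + \sum_i wm i + ws = 1)
  (pb qb : R) (hq0 : 0 < qb) (hqp : qb < pb) (hp1 : pb < 1) (hpq : pb + qb = 1)
  (hu : ustar m wo wm < 1 / 2) :
  positive_recurrent_chain pr wo ws wm pb qb.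
Proof.
(* [hp1] follows from [hq0] and [hpq]. *)
move=> y _.
exact: pos_recurrent_every_state hpr0 hpr1 hwo hws hwm hw1 hq0 hqp hpq hI hm hu y.
Qed.
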